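(* Let $A$ and $B$ be discrete random variables with finite supports such that $\{A,B\}$ is quasi-uniform. Then there exists a random variable $W$, jointly distributed with $(A,B)$, such that $H(W)=H(A\mid B)$ and $H(A\mid B,W)=0$.
   Context: A family of random variables $\{X_i:i\in\mathcal N\}$ is quasi-uniform if for every subset $\alpha\subseteq\mathcal N$, the random variable $(X_i:i\in\alpha)$ is uniformly distributed over its support; for $\{A,B\}$ this means $A$, $B$ and $(A,B)$ are each uniform on their supports. *)

From mathcomp Require Import all_boot all_order all_algebra.
From mathcomp Require Import reals exp.
Set Implicit Arguments. Unset Strict Implicit. Unset Printing Implicit Defensive.
Import Order.TTheory GRing.Theory Num.Theory.
Local Open Scope ring_scope.

Section Info.
Variable R : realType.

Definition is_pmf (T : finType) (f : {ffun T -> R}) : Prop :=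
  (forall x, 0 <= f x) /\ \sum_(x : T) f x = 1.

Definition uniform_on_support (T : finType) (f : {ffun T -> R}) : Prop :=
  forall x y, 0 < f x -> 0 < f y -> f x = f y.

Definition fst_marg (X Y : finType) (p : {ffun X * Y -> R}) : {ffun X -> R} :=
  [ffun x => \sum_(y : Y) p (x, y)].
Definition snd_marg (X Y : finType) (p : {ffun X * Y -> R}) : {ffun Y -> R} :=
  [ffun y => \sum_(x : X) p (x, y)].

Definition entropy (T : finType) (f : {ffun T -> R}) : R :=
  - \sum_(x : T | 0 < f x) f x * ln (f x).

Definition cond_entropy (X Y : finType) (p : {ffun X * Y -> R}) : R :=
  - \sum_(u : X * Y | 0 < p u) p u * ln (p u / snd_marg p u.2).

Definition quasi_uniform2 (X Y : finType) (p : {ffun X * Y -> R}) : Prop :=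
  [/\ uniform_on_support (fst_marg p), uniform_on_support (snd_marg p)
    & uniform_on_support p].

End Info.

From mathcomp Require Import all_boot all_order all_algebra.
From mathcomp Require Import reals exp.
Set Implicit Arguments. Unset Strict Implicit. Unset Printing Implicit Defensive.
Import Order.TTheory GRing.Theory Num.Theory.
Local Open Scope ring_scope.

(* Let c be the common value of p on its support and S b = {a | p (a, b) > 0}.
   Then P_B(b) = c |S b|, so uniformity of B forces all nonempty fibers S b to
   have the same size k, and H(A | B) = ln k.  Take W to be the position of A
   in a fixed enumeration of S B: A is recovered from (B, W), and
   P(W = w) = [w < k] * c * #{b | S b nonempty} = [w < k] / k, so H(W) = ln k. *)

Lemma sum_index_uniq (R : pzSemiRingType) (T : eqType) (s : seq T) (i : nat) :
  uniq s -> \sum_(a <- s) ((i == index a s)%:R : R) = (i < size s)%:R.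
Proof.
elim: s i => [|x s IHs] i /=; first by rewrite big_nil.
case/andP=> xNs s_uniq; rewrite big_cons eqxx.
rewrite (eq_big_seq (fun a => ((i == (index a s).+1)%:R : R))); last first.
  by move=> a a_s /=; case: (x =P a) => // xa; rewrite xa a_s in xNs.
case: i => [|i] /=; first by rewrite big1 ?addr0.
by rewrite add0r IHs.
Qed.

Section Pmf.
Variable R : realType.

Lemma pmf_exists_pos (T : finType) (f : {ffun T -> R}) :
  is_pmf f -> exists x, 0 < f x.
Proof.
case=> f_ge0 f_sum1; apply/existsP; apply: contraT => /existsPn f_le0.
move: f_sum1; rewrite big1 => [/eqP|x _]; first by rewrite eq_sym oner_eq0.
by apply/eqP; rewrite eq_le f_ge0 andbT leNgt f_le0.
Qed.

Lemma sum_pos_pmf (T : finType) (f : {ffun T -> R}) :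
  is_pmf f -> \sum_(x | 0 < f x) f x = 1.
Proof.
case=> f_ge0 <-; rewrite big_mkcond; apply: eq_bigr => x _.
by case: ifPn => //; rewrite lt0r f_ge0 andbT negbK => /eqP.
Qed.

Lemma sum_pmf_ln_const (T : finType) (f : {ffun T -> R}) (g : T -> R) v :
  is_pmf f -> (forall x, 0 < f x -> g x = v) ->
  \sum_(x | 0 < f x) f x * ln (g x) = ln v.
Proof.
move=> f_pmf gE; rewrite (eq_bigr (fun x => f x * ln v)) => [|x /gE-> //].
by rewrite -mulr_suml sum_pos_pmf ?mul1r.
Qed.

Lemma uniform_pmfE (T : finType) (f : {ffun T -> R}) x0 x :
  is_pmf f -> uniform_on_support f -> 0 < f x0 ->
  f x = if 0 < f x then f x0 else 0.
Proof.
case=> f_ge0 _ f_unif fx0_gt0; case: ifPn => [fx_gt0|]; first exact: f_unif.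
by rewrite lt0r f_ge0 andbT negbK => /eqP.
Qed.

Lemma sum_pair (X Y : finType) (F : X * Y -> R) :
  \sum_u F u = \sum_x \sum_y F (x, y).
Proof. by rewrite pair_bigA; apply: eq_bigr => -[]. Qed.

Lemma sum_snd_marg (X Y : finType) (p : {ffun X * Y -> R}) :
  \sum_y snd_marg p y = \sum_u p u.
Proof.
under eq_bigr do rewrite ffunE.
by rewrite exchange_big sum_pair.
Qed.

Lemma snd_marg_pmf (X Y : finType) (p : {ffun X * Y -> R}) :
  is_pmf p -> is_pmf (snd_marg p).
Proof.
case=> p_ge0 p_sum1; split; last by rewrite sum_snd_marg.
by move=> y; rewrite ffunE sumr_ge0.
Qed.

Definition adjoin {X Y W : finType} (p : {ffun X * Y -> R}) (g : X -> Y -> W) :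
    {ffun X * (Y * W) -> R} :=
  [ffun u => p (u.1, u.2.1) * (u.2.2 == g u.1 u.2.1)%:R].

Variables (X Y W : finType) (p : {ffun X * Y -> R}) (g : X -> Y -> W).

Lemma adjoin_sumW a b : \sum_w adjoin p g (a, (b, w)) = p (a, b).
Proof.
under eq_bigr do rewrite ffunE /=.
rewrite -mulr_sumr (bigD1 (g a b)) //= eqxx big1 ?addr0 ?mulr1 // => w.
by move/negbTE=> ->.
Qed.

Lemma adjoin_pmf : is_pmf p -> is_pmf (adjoin p g).
Proof.
case=> p_ge0 p_sum1; split=> [u|]; first by rewrite ffunE mulr_ge0 ?ler0n.
rewrite -p_sum1 !sum_pair; apply: eq_bigr => a _.
by rewrite sum_pair; apply: eq_bigr => b _; rewrite adjoin_sumW.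
Qed.

Lemma cond_entropy_adjoin :
  (forall u, 0 <= p u) ->
  (forall b, {in [pred a | 0 < p (a, b)] &, injective (g^~ b)}) ->
  cond_entropy (adjoin p g) = 0.
Proof.
move=> p_ge0 g_inj; rewrite /cond_entropy big1 ?oppr0 // => -[a [b w]] /=.
have adjoinE a' w' : adjoin p g (a', (b, w')) = p (a', b) * (w' == g a' b)%:R.
  by rewrite ffunE.
rewrite adjoinE; case: eqP => [-> | _]; last by rewrite mulr0 ltxx.
rewrite mulr1 => pab_gt0.
have -> : snd_marg (adjoin p g) (b, g a b) = p (a, b).
  rewrite ffunE (bigD1 a) //= adjoinE eqxx mulr1 big1 ?addr0 // => a' a'Na.
  rewrite adjoinE; case: eqP => [ga' | _]; last by rewrite mulr0.
  have /negbTE pa'b : ~~ (0 < p (a', b)).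
    by apply: contra a'Na => pa'b; apply/eqP/(g_inj b) => //; rewrite ga'.
  by rewrite mulr1; apply/eqP; rewrite eq_le p_ge0 andbT leNgt pa'b.
by rewrite mulfV ?gt_eqF // ln1 mulr0.
Qed.

End Pmf.

Section QuasiUniform.
Variables (R : realType) (TA TB : finType) (p : {ffun TA * TB -> R}).
Hypotheses (p_pmf : is_pmf p) (p_unif : uniform_on_support p)
  (pB_unif : uniform_on_support (snd_marg p)).
Variable u0 : TA * TB.
Hypothesis p_u0_gt0 : 0 < p u0.

Definition fiber b := [set a | 0 < p (a, b)].

Let c := p u0.
Let k := #|fiber u0.2|.

Let pE u : p u = if 0 < p u then c else 0.
Proof. exact: uniform_pmfE. Qed.

Lemma snd_marg_fiber b : snd_marg p b = c * #|fiber b|%:R.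
Proof.
rewrite ffunE -sumr_const mulr_sumr [RHS]big_mkcond; apply: eq_bigr => a _.
by rewrite inE {1}pE mulr1; case: ifP.
Qed.

Let k_gt0 : (0 < k)%N.
Proof. by apply/card_gt0P; exists u0.1; rewrite inE -surjective_pairing. Qed.

Lemma card_fiber b : (0 < #|fiber b|)%N -> #|fiber b| = k.
Proof.
have marg_gt0 b' : (0 < #|fiber b'|)%N -> 0 < snd_marg p b'.
  by move=> ?; rewrite snd_marg_fiber mulr_gt0 ?ltr0n.
move=> /marg_gt0 /pB_unif /(_ (marg_gt0 _ k_gt0)).
rewrite !snd_marg_fiber => /(mulfI (lt0r_neq0 p_u0_gt0)) /eqP.
by rewrite eqr_nat => /eqP.
Qed.

Lemma cond_entropy_quasi_uniform : cond_entropy p = - ln k%:R^-1.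
Proof.
rewrite /cond_entropy
  (@sum_pmf_ln_const _ _ _ (fun u => p u / snd_marg p u.2) k%:R^-1 p_pmf) //.
move=> -[a b] /= pab_gt0.
rewrite snd_marg_fiber card_fiber; last by apply/card_gt0P; exists a; rewrite inE.
by rewrite {1}pE pab_gt0 invfM mulrA mulfV ?mul1r ?gt_eqF.
Qed.

Lemma mass_nonempty_fibers : \sum_b c * (0 < #|fiber b|)%:R = k%:R^-1.
Proof.
have k_neq0 : (k%:R : R) != 0 by rewrite pnatr_eq0 -lt0n k_gt0.
apply: (mulfI k_neq0); rewrite mulfV // mulr_sumr.
rewrite -[RHS](proj2 (snd_marg_pmf p_pmf)).
apply: eq_bigr => b _; rewrite snd_marg_fiber.
have [->|fb_gt0] := posnP #|fiber b|; first by rewrite !mulr0.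
by rewrite card_fiber // mulr1 mulrC.
Qed.

Definition fiber_index a b : 'I_#|TA|.+1 := inord (index a (enum (fiber b))).

Lemma fiber_index_bound a b : (index a (enum (fiber b)) < #|TA|.+1)%N.
Proof. by rewrite ltnS (leq_trans (index_size _ _)) // -cardE max_card. Qed.

Lemma eq_fiber_index w a b :
  (w == fiber_index a b) = (val w == index a (enum (fiber b))).
Proof. by rewrite -val_eqE /= inordK ?fiber_index_bound. Qed.

Lemma fiber_index_inj b :
  {in [pred a | 0 < p (a, b)] &, injective (fiber_index^~ b)}.
Proof.
move=> a a' pab pa'b /eqP; rewrite eq_fiber_index /= inordK ?fiber_index_bound //.
by move/eqP; apply: index_inj; rewrite ?mem_enum ?inE.
Qed.

Lemma fiber_index_distr w :
  snd_marg (snd_marg (adjoin p fiber_index)) w = (val w < k)%:R / k%:R.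
Proof.
rewrite ffunE -mass_nonempty_fibers mulr_sumr; apply: eq_bigr => b _.
have -> : snd_marg (adjoin p fiber_index) (b, w) = c * (val w < #|fiber b|)%:R.
  rewrite ffunE cardE -sum_index_uniq ?enum_uniq // big_enum /= mulr_sumr.
  rewrite [RHS]big_mkcond; apply: eq_bigr => a _.
  rewrite ffunE /= inE eq_fiber_index {1}pE.
  by case: ifP => _; rewrite ?mul0r.
have [->|fb_gt0] := posnP #|fiber b|; first by rewrite ltn0 !mulr0.
by rewrite card_fiber // mulr1 mulrC.
Qed.

Lemma entropy_fiber_index :
  entropy (snd_marg (snd_marg (adjoin p fiber_index))) = - ln k%:R^-1.
Proof.
rewrite /entropy (@sum_pmf_ln_const _ _ _ _ k%:R^-1) //.
  by do 2!apply: snd_marg_pmf; apply: adjoin_pmf.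
by move=> w; rewrite fiber_index_distr; case: ltnP; rewrite ?mul1r ?mul0r ?ltxx.
Qed.

End QuasiUniform.

Theorem lemma2 (R : realType) (TA TB : finType) (p : {ffun TA * TB -> R}) :
  is_pmf p -> quasi_uniform2 p ->
  exists (TW : finType) (q : {ffun TA * (TB * TW) -> R}),
    [/\ is_pmf q,
        (forall a b, \sum_(w : TW) q (a, (b, w)) = p (a, b)),
        entropy (snd_marg (snd_marg q)) = cond_entropy p
      & cond_entropy q = 0].
Proof.
move=> p_pmf [_ pB_unif p_unif]; have [u0 p_u0_gt0] := pmf_exists_pos p_pmf.
exists 'I_#|TA|.+1, (adjoin p (fiber_index p)); split.
- exact: adjoin_pmf.
- exact: adjoin_sumW.
- by rewrite (entropy_fiber_index p_pmf p_unif pB_unif p_u0_gt0)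
     (cond_entropy_quasi_uniform p_pmf p_unif pB_unif p_u0_gt0).
- apply: cond_entropy_adjoin; [by case: p_pmf | exact: fiber_index_inj].
Qed.
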